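(* Fix $N=\{1,\dots,n\}$ and a cost function $C:2^N\to\mathbb{R}_{\ge0}$ with $C(\emptyset)=0$. Consider maps assigning to each probability distribution $\mathcal{D}$ over $2^N$ a vector $\phi^{\mathcal{D}}\in\mathbb{R}^n$. Among such maps, the data-dependent Shapley value $$\phi^{\mathcal{D}}_i=\sum_{S\subseteq N:\, i\in S}\Pr[S\sim\mathcal{D}]\cdot\frac{C(S)}{|S|}$$ is the unique one satisfying the following four axioms: (Balance) $\sum_{i\in N}\phi^{\mathcal{D}}_i=\mathbb{E}_{S\sim\mathcal{D}}[C(S)]$ for all $\mathcal{D}$; (Symmetry) for all $\mathcal{D}$ and all $i,j$, if $\Pr_{S\sim\mathcal{D}}[|S\cap\{i,j\}|=1]=0$ then $\phi^{\mathcal{D}}_i=\phi^{\mathcal{D}}_j$; (Zero element) for all $\mathcal{D}$ and all $i$, if $\Pr_{S\sim\mathcal{D}}[i\in S]=0$ then $\phi^{\mathcal{D}}_i=0$; (Additivity) for all $i$, all distributions $\mathcal{D}_1,\mathcal{D}_2$ and all $\alpha,\beta\ge0$ with $\alpha+\beta=1$, $\phi^{\alpha\mathcal{D}_1+\beta\mathcal{D}_2}_i=\alpha\phi^{\mathcal{D}_1}_i+\beta\phi^{\mathcal{D}_2}_i$, where $\alpha\mathcal{D}_1+\beta\mathcal{D}_2$ is the mixture with $\Pr[S\sim\alpha\mathcal{D}_1+\beta\mathcal{D}_2]=\alpha\Pr[S\sim\mathcal{D}_1]+\beta\Pr[S\sim\mathcal{D}_2]$. *)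

From mathcomp Require Import all_boot all_order all_algebra.
From mathcomp Require Import reals.
Set Implicit Arguments. Unset Strict Implicit. Unset Printing Implicit Defensive.
Import Order.TTheory GRing.Theory Num.Theory.
Local Open Scope ring_scope.

(* Players N = 'I_n (i.e. {0,..,n-1}, standing for {1,..,n}); coalitions {set 'I_n}.
   A distribution over 2^N is a function D giving Pr[S ~ D]. *)
Definition distr_fn (R : realType) (n : nat) := {ffun {set 'I_n} -> R}.

Definition is_distr (R : realType) (n : nat) (D : distr_fn R n) : Prop :=
  (forall S, 0 <= D S) /\ \sum_(S : {set 'I_n}) D S = 1.

Definition prob (R : realType) (n : nat) (D : distr_fn R n) (E : pred {set 'I_n}) : R :=
  \sum_(S : {set 'I_n} | E S) D S.

Definition expect_cost (R : realType) (n : nat) (C : {set 'I_n} -> R) (D : distr_fn R n) : R :=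
  \sum_(S : {set 'I_n}) D S * C S.

Definition mixture (R : realType) (n : nat) (a b : R) (D1 D2 : distr_fn R n) : distr_fn R n :=
  [ffun S => a * D1 S + b * D2 S].

Definition dd_shapley (R : realType) (n : nat) (C : {set 'I_n} -> R)
  (D : distr_fn R n) (i : 'I_n) : R :=
  \sum_(S : {set 'I_n} | i \in S) D S * (C S / (#|S|)%:R).

Definition value_map (R : realType) (n : nat) := distr_fn R n -> 'I_n -> R.

Definition ax_balance (R : realType) (n : nat) (C : {set 'I_n} -> R) (phi : value_map R n) : Prop :=
  forall D, is_distr D -> \sum_(i : 'I_n) phi D i = expect_cost C D.

Definition ax_symmetry (R : realType) (n : nat) (phi : value_map R n) : Prop :=
  forall D, is_distr D -> forall i j : 'I_n,
    prob D (fun S => #|S :&: [set i; j]| == 1%N) = 0 -> phi D i = phi D j.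

Definition ax_zero (R : realType) (n : nat) (phi : value_map R n) : Prop :=
  forall D, is_distr D -> forall i : 'I_n,
    prob D (fun S => i \in S) = 0 -> phi D i = 0.

Definition ax_additivity (R : realType) (n : nat) (phi : value_map R n) : Prop :=
  forall (i : 'I_n) D1 D2 (a b : R), is_distr D1 -> is_distr D2 ->
    0 <= a -> 0 <= b -> a + b = 1 ->
    phi (mixture a b D1 D2) i = a * phi D1 i + b * phi D2 i.

Definition satisfies_axioms (R : realType) (n : nat) (C : {set 'I_n} -> R) (phi : value_map R n) : Prop :=
  [/\ ax_balance C phi, ax_symmetry phi, ax_zero phi & ax_additivity phi].

(* The axioms pin down the value on point masses: for the dirac distribution at S,
   Zero element kills the players outside S, Symmetry equalises those inside S, and Balance
   forces each of them to receive C(S)/|S|. Every distribution is obtained from point masses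
   by finitely many binary mixtures (peel off one coalition of the support and renormalise
   the rest), so Additivity propagates the agreement to all distributions. *)
From mathcomp Require Import all_boot all_order all_algebra.
From mathcomp Require Import reals.
Set Implicit Arguments. Unset Strict Implicit. Unset Printing Implicit Defensive.
Import Order.TTheory GRing.Theory Num.Theory.
Local Open Scope ring_scope.

Lemma card_setI_set2 (T : finType) (S : {set T}) i j :
  (i \in S) != (j \in S) -> #|S :&: [set i; j]| = 1%N.
Proof.
wlog iS : i j / i \in S => [hwlog ij|].
  have [iS|iS] := boolP (i \in S); first exact: hwlog.
  rewrite setUC; apply: hwlog; last by rewrite eq_sym.
  by move: ij; rewrite (negbTE iS); case: (j \in S).
rewrite iS; have [//|jS _] := boolP (j \in S).
suff -> : S :&: [set i; j] = [set i] by rewrite cards1.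
apply/setP => x; rewrite !inE; have [->|_] := eqVneq x i; first by rewrite iS.
by have [->|_] := eqVneq x j; rewrite ?(negbTE jS) ?andbF.
Qed.

Section Distributions.
Variables (R : realType) (n : nat).
Implicit Types (D : distr_fn R n) (S T : {set 'I_n}).

Definition dirac S : distr_fn R n := [ffun T => (T == S)%:R].

Definition supp D : {set {set 'I_n}} := [set T | D T != 0].

Lemma big_dirac S (P : pred {set 'I_n}) (F : {set 'I_n} -> R) :
  \sum_(T | P T) dirac S T * F T = (P S)%:R * F S.
Proof.
rewrite big_mkcond (bigD1 S) //= ffunE eqxx mul1r big1 ?addr0.
  by case: (P S); rewrite ?mul1r ?mul0r.
by move=> T /negbTE TS; rewrite ffunE TS mul0r; case: (P T).
Qed.

Lemma prob_dirac S (E : pred {set 'I_n}) : prob (dirac S) E = (E S)%:R.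
Proof.
by have := big_dirac S E (fun=> 1); under eq_bigr do rewrite mulr1; rewrite mulr1.
Qed.

Lemma is_distr_dirac S : is_distr (dirac S).
Proof.
split=> [T|]; first by rewrite ffunE ler0n.
exact: (prob_dirac S predT).
Qed.

Lemma prob_eq0_mass D (E : pred {set 'I_n}) :
  is_distr D -> prob D E = 0 -> forall S, E S -> D S = 0.
Proof. by move=> [D_ge0 _] /psumr_eq0P; apply=> S _; apply: D_ge0. Qed.

Lemma distr_sum_neq D S : is_distr D -> \sum_(T | T != S) D T = 1 - D S.
Proof. by case=> _ D1; rewrite -D1 [in RHS](bigD1 S) //= addrC addrK. Qed.

Lemma distr_mass1 D S : is_distr D -> D S = 1 -> D = dirac S.
Proof.
move=> DD DS1; have rest0 := distr_sum_neq S DD; rewrite DS1 subrr in rest0.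
apply/ffunP => T; rewrite ffunE; have [->|TS] := eqVneq T S; first by rewrite DS1.
by apply: (psumr_eq0P _ rest0) => // U _; case: DD.
Qed.

Lemma supp_neq0 D : is_distr D -> supp D != set0.
Proof.
case=> _ D1; apply/eqP => suppD0; move: D1; rewrite big1 => [/eqP|T _].
  by rewrite eq_sym oner_eq0.
by have := in_set0 T; rewrite -suppD0 inE => /negbFE/eqP.
Qed.

Lemma distr_le1 D S : is_distr D -> D S <= 1.
Proof.
by move=> DD; rewrite -subr_ge0 -(distr_sum_neq S DD) sumr_ge0 // => T _; case: DD.
Qed.

Definition cond_neq D S : distr_fn R n :=
  [ffun T => if T == S then 0 else D T / (1 - D S)].

Lemma is_distr_cond_neq D S : is_distr D -> D S != 1 -> is_distr (cond_neq D S).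
Proof.
move=> DD DS1; have [D_ge0 _] := DD.
have b_gt0 : 0 < 1 - D S by rewrite subr_gt0 lt_neqAle DS1 distr_le1.
split=> [T|].
  by rewrite ffunE; case: eqP => // _; exact: divr_ge0 (D_ge0 T) (ltW b_gt0).
rewrite (bigD1 S) //= ffunE eqxx add0r.
rewrite (eq_bigr (fun T => D T / (1 - D S))) => [|T /negbTE TS]; last by rewrite ffunE TS.
by rewrite -mulr_suml distr_sum_neq // divff // gt_eqF.
Qed.

Lemma mixture_dirac_cond_neq D S :
  D S != 1 -> D = mixture (D S) (1 - D S) (dirac S) (cond_neq D S).
Proof.
move=> DS1; apply/ffunP => T; rewrite !ffunE.
have [->|_] := eqVneq T S; first by rewrite mulr1 mulr0 addr0.
by rewrite mulr0 add0r mulrC divfK // subr_eq0 eq_sym.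
Qed.

Lemma supp_cond_neq D S : supp (cond_neq D S) \subset supp D :\ S.
Proof.
apply/subsetP => T; rewrite !inE ffunE.
have [->|TS] := eqVneq T S; first by rewrite eqxx.
by rewrite mulf_eq0 negb_or => /andP[].
Qed.

Lemma distr_ind (P : distr_fn R n -> Prop) :
  (forall S, P (dirac S)) ->
  (forall D1 D2 a b, is_distr D1 -> is_distr D2 -> 0 <= a -> 0 <= b -> a + b = 1 ->
     P D1 -> P D2 -> P (mixture a b D1 D2)) ->
  forall D, is_distr D -> P D.
Proof.
move=> P_dirac P_mix; suff: forall k D, (#|supp D| <= k)%N -> is_distr D -> P D.
  by move=> + D; apply.
elim=> [|k IHk] D suppDk DD; have /set0Pn[S DS] := supp_neq0 DD.
  by move: suppDk; rewrite leqn0 cards_eq0 => /eqP suppD0; rewrite suppD0 inE in DS.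
have [DS1|DS1] := eqVneq (D S) 1; first by rewrite (distr_mass1 DD DS1).
rewrite (mixture_dirac_cond_neq DS1); apply: P_mix.
- exact: is_distr_dirac.
- exact: is_distr_cond_neq.
- by case: DD.
- by rewrite subr_ge0 distr_le1.
- by rewrite addrC subrK.
- exact: P_dirac.
apply: IHk; last exact: is_distr_cond_neq.
apply: leq_trans (subset_leq_card (supp_cond_neq D S)) _.
by move: suppDk; rewrite (cardsD1 S) DS.
Qed.

End Distributions.

Section DataDependentShapley.
Variables (R : realType) (n : nat) (C : {set 'I_n} -> R).
Implicit Types (S : {set 'I_n}) (i : 'I_n).

Lemma dd_shapley_dirac S i :
  dd_shapley C (dirac R S) i = (i \in S)%:R * (C S / #|S|%:R).
Proof. exact: big_dirac. Qed.

Lemma expect_cost_dirac S : expect_cost C (dirac R S) = C S.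
Proof. by rewrite -[RHS]mul1r -(big_dirac S predT). Qed.

Lemma dd_shapley_mixture a b D1 D2 i :
  dd_shapley C (mixture a b D1 D2) i = a * dd_shapley C D1 i + b * dd_shapley C D2 i.
Proof.
rewrite /dd_shapley !mulr_sumr -big_split /=; apply: eq_bigr => S _.
by rewrite ffunE mulrDl !mulrA.
Qed.

Lemma dd_shapley_balance : C set0 = 0 -> ax_balance C (dd_shapley C).
Proof.
move=> C0 D _; rewrite /dd_shapley /expect_cost.
under eq_bigr do rewrite big_mkcond /=.
rewrite exchange_big /=; apply: eq_bigr => S _.
rewrite -big_mkcond /= sumr_const -mulrnAr -mulr_natr.
(* The empty coalition has no member to be charged C set0. *)
have [->|S_neq0] := eqVneq S set0; first by rewrite C0 !mul0r.
by rewrite mulfVK // pnatr_eq0 cards_eq0.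
Qed.

Lemma dd_shapley_symmetry : ax_symmetry (dd_shapley C).
Proof.
move=> D DD i j /(prob_eq0_mass DD) D0.
rewrite /dd_shapley big_mkcond [RHS]big_mkcond; apply: eq_bigr => S _ /=.
have [->//|ij] := eqVneq (i \in S) (j \in S).
by rewrite D0 ?card_setI_set2 // mul0r !if_same.
Qed.

Lemma dd_shapley_zero : ax_zero (dd_shapley C).
Proof.
move=> D DD i /(prob_eq0_mass DD) D0.
by rewrite /dd_shapley big1 // => S /D0 ->; rewrite mul0r.
Qed.

Lemma dd_shapley_additivity : ax_additivity (dd_shapley C).
Proof. by move=> i D1 D2 a b *; apply: dd_shapley_mixture. Qed.

End DataDependentShapley.

Section Uniqueness.
Variables (R : realType) (n : nat) (C : {set 'I_n} -> R) (phi : value_map R n).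
Hypotheses (phi_balance : ax_balance C phi) (phi_symmetry : ax_symmetry phi)
  (phi_zero : ax_zero phi).
Implicit Types (S : {set 'I_n}) (i j : 'I_n).

Lemma value_dirac_notin S i : i \notin S -> phi (dirac R S) i = 0.
Proof.
by move=> iS; apply: phi_zero (is_distr_dirac R S) _ _; rewrite prob_dirac (negbTE iS).
Qed.

Lemma value_dirac_in S i j : i \in S -> j \in S -> phi (dirac R S) i = phi (dirac R S) j.
Proof.
move=> iS jS; have [->//|ij] := eqVneq i j.
apply: phi_symmetry (is_distr_dirac R S) _ _ _; rewrite prob_dirac.
suff -> : S :&: [set i; j] = [set i; j] by rewrite cards2 ij.
by apply/setIidPr/subsetP => x; rewrite !inE => /orP[]/eqP->.
Qed.

Lemma value_dirac S i : phi (dirac R S) i = dd_shapley C (dirac R S) i.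
Proof.
rewrite dd_shapley_dirac; have [iS|iS] := boolP (i \in S); last first.
  by rewrite mul0r value_dirac_notin.
have S_gt0 : (0 < #|S|)%N by rewrite card_gt0; apply/set0Pn; exists i.
have := phi_balance (is_distr_dirac R S); rewrite expect_cost_dirac.
rewrite (bigID (mem S)) /= [X in _ + X]big1 => [|j /value_dirac_notin //].
rewrite addr0 (eq_bigr _ (fun j jS => value_dirac_in jS iS)) sumr_const => <-.
by rewrite mul1r -[_ *+ #|S|]mulr_natr mulfK // pnatr_eq0 -lt0n.
Qed.

End Uniqueness.

Theorem theorem10 (R : realType) (n : nat) (C : {set 'I_n} -> R)
  (C_ge0 : forall S, 0 <= C S) (C0 : C set0 = 0) :
  satisfies_axioms C (@dd_shapley R n C) /\
  (forall phi : value_map R n, satisfies_axioms C phi ->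
     forall D, is_distr D -> forall i, phi D i = dd_shapley C D i).
Proof.
split; first by split; [exact: dd_shapley_balance | exact: dd_shapley_symmetry
                       | exact: dd_shapley_zero | exact: dd_shapley_additivity].
move=> phi [phi_balance phi_symmetry phi_zero phi_additivity].
apply: distr_ind => [S i | D1 D2 a b D1d D2d a_ge0 b_ge0 ab1 eq1 eq2 i].
  exact: value_dirac.
by rewrite phi_additivity // dd_shapley_mixture eq1 eq2.
Qed.
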